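(* Let $D$ be a pv-monoid (idempotent, with symmetric valuation function), $P$ a nonempty finite set of ports and $f$ a PCL formula over $P$. Then there exist finite index sets $I$ and $J_i$ ($i\in I$) and full monomials $m_{i,j}$ ($i\in I$, $j\in J_i$) such that \[f\equiv\bigoplus_{i\in I}\sum_{j\in J_i}m_{i,j}\equiv\bigoplus_{i\in I}\Big(1\otimes\sum_{j\in J_i}m_{i,j}\Big).\]
   Context: A pv-monoid $(D,\oplus,\mathrm{val},\otimes,0,1)$ consists of a commutative monoid $(D,\oplus,0)$, a map $\mathrm{val}$ from nonempty finite sequences over $D$ to $D$ with $\mathrm{val}(d)=d$ and $\mathrm{val}(d_1,\dots,d_n)=0$ whenever some $d_i=0$, a binary operation $\otimes$ and an element $1$ with $\mathrm{val}(1,\dots,1)=1$, $0\otimes d=d\otimes0=0$, $1\otimes d=d\otimes1=d$. Standing assumption: $D$ is idempotent and $\mathrm{val}$ is symmetric. An empty $\oplus$-sum is $0$. $I(P)$ is the set of nonempty subsets of $P$, $C(P)$ the set of nonempty subsets of $I(P)$. PIL formulas: $\phi::=true\mid p\mid\overline{\phi}\mid\phi\vee\phi$ ($p\in P$), $\alpha\models_i p$ iff $p\in\alpha$, negation and disjunction as usual, $\wedge$ via De Morgan. A full monomial is a PIL formula $\bigwedge_{p\in P_+}p\wedge\bigwedge_{p\in P_-}\overline p$ with $P_+\cup P_-=P$, $P_+\cap P_-=\emptyset$. PCL formulas: $f::=true\mid\phi\mid\neg f\mid f\sqcup f\mid f+f$; $\gamma\models true$; $\gamma\models\phi$ iff every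 $\alpha\in\gamma$ satisfies $\phi$; $\neg,\sqcup$ are complement and union; $\gamma\models f_1+f_2$ iff $\gamma=\gamma_1\cup\gamma_2$ with $\gamma_1,\gamma_2\in C(P)$, $\gamma_1\models f_1,\gamma_2\models f_2$. $\sum_{j\in J}m_j$ is the $+$-combination. Weighted formulas are built from constants $d\in D$ and PCL formulas by $\oplus,\otimes$ (and further operators); semantics $\|\cdot\|:C(P)\to D$ with $\|d\|(\gamma)=d$, $\|f\|(\gamma)=1$ if $\gamma\models f$ and $0$ otherwise, $\oplus,\otimes$ pointwise. $\equiv$ means equality of semantics on all of $C(P)$. *)

From Stdlib Require Import List Permutation ClassicalEpsilon.
From mathcomp Require Import all_boot.

Set Implicit Arguments.
Unset Strict Implicit.
Unset Printing Implicit Defensive.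

Record pvMonoid := PvMonoid {
  pv_carrier :> Type;
  pv_add : pv_carrier -> pv_carrier -> pv_carrier;
  pv_zero : pv_carrier;
  (* val is given on all lists; only its values on nonempty lists matter *)
  pv_val : list pv_carrier -> pv_carrier;
  pv_mul : pv_carrier -> pv_carrier -> pv_carrier;
  pv_one : pv_carrier;
  pv_addA : forall a b c, pv_add a (pv_add b c) = pv_add (pv_add a b) c;
  pv_addC : forall a b, pv_add a b = pv_add b a;
  pv_add0d : forall a, pv_add pv_zero a = a;
  pv_val1 : forall d, pv_val (d :: nil) = d;
  pv_val0 : forall s, List.In pv_zero s -> pv_val s = pv_zero;
  pv_val_one : forall n, 0 < n -> pv_val (nseq n pv_one) = pv_one;
  pv_mul0d : forall d, pv_mul pv_zero d = pv_zero;
  pv_muld0 : forall d, pv_mul d pv_zero = pv_zero;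
  pv_mul1d : forall d, pv_mul pv_one d = d;
  pv_muld1 : forall d, pv_mul d pv_one = d
}.

Definition pv_idempotent (D : pvMonoid) : Prop :=
  forall d : D, pv_add d d = d.

Definition pv_val_symmetric (D : pvMonoid) : Prop :=
  forall s t : list D, s <> nil -> Permutation s t -> pv_val s = pv_val t.

Section PortLogic.
Variable P : finType.

Definition is_interaction (a : {set P}) : bool := a != set0.

Definition is_C (g : {set {set P}}) : Prop :=
  g != set0 /\ forall a, a \in g -> is_interaction a.

Inductive pil : Type :=
| PilTrue : pil
| PilVar : P -> pil
| PilNeg : pil -> pil
| PilOr : pil -> pil -> pil.

Fixpoint pil_sat (a : {set P}) (phi : pil) : bool :=
  match phi with
  | PilTrue => true
  | PilVar p => p \in a
  | PilNeg phi1 => ~~ pil_sat a phi1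
  | PilOr phi1 phi2 => pil_sat a phi1 || pil_sat a phi2
  end.

Definition PilAnd (phi1 phi2 : pil) : pil :=
  PilNeg (PilOr (PilNeg phi1) (PilNeg phi2)).

(* full monomial determined by P_+ = Pp (and P_- = complement of Pp):
   /\_{p in P+} p /\ /\_{p in P-} ~p, conjunction over all ports of P *)
Definition pil_lit (Pp : {set P}) (p : P) : pil :=
  if p \in Pp then PilVar p else PilNeg (PilVar p).

Fixpoint pil_bigand (l : seq pil) : pil :=
  match l with
  | nil => PilTrue
  | phi :: nil => phi
  | phi :: l' => PilAnd phi (pil_bigand l')
  end.

Definition full_monomial (Pp : {set P}) : pil :=
  pil_bigand [seq pil_lit Pp p | p <- enum P].

Inductive pcl : Type :=
| PclTrue : pcl
| PclPil : pil -> pcl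
| PclNeg : pcl -> pcl
| PclOr : pcl -> pcl -> pcl
| PclPlus : pcl -> pcl -> pcl.

Fixpoint pcl_sat (g : {set {set P}}) (f : pcl) : Prop :=
  match f with
  | PclTrue => True
  | PclPil phi => forall a, a \in g -> pil_sat a phi
  | PclNeg f1 => ~ pcl_sat g f1
  | PclOr f1 f2 => pcl_sat g f1 \/ pcl_sat g f2
  | PclPlus f1 f2 => exists g1 g2, is_C g1 /\ is_C g2 /\ g = g1 :|: g2 /\
                       pcl_sat g1 f1 /\ pcl_sat g2 f2
  end.

(* + combination of a nonempty family m0, m1, ..., mk *)
Fixpoint pcl_sum (m0 : pcl) (ms : seq pcl) : pcl :=
  match ms with
  | nil => m0
  | m1 :: ms' => PclPlus m0 (pcl_sum m1 ms')
  end.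

(* weighted formulas (fragment with constants, PCL formulas, (+), (x)) *)
Inductive wform (D : pvMonoid) : Type :=
| WConst : D -> wform D
| WPcl : pcl -> wform D
| WOplus : wform D -> wform D -> wform D
| WOtimes : wform D -> wform D -> wform D.

Fixpoint wsem (D : pvMonoid) (w : wform D) (g : {set {set P}}) : D :=
  match w with
  | WConst d => d
  | WPcl f => if excluded_middle_informative (pcl_sat g f)
              then pv_one D else pv_zero D
  | WOplus w1 w2 => pv_add (wsem w1 g) (wsem w2 g)
  | WOtimes w1 w2 => pv_mul (wsem w1 g) (wsem w2 g)
  end.

Definition wbigoplus (D : pvMonoid) (l : seq (wform D)) : wform D :=
  foldr (@WOplus D) (WConst (pv_zero D)) l.

Definition wequiv (D : pvMonoid) (w1 w2 : wform D) : Prop :=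
  forall g, is_C g -> wsem w1 g = wsem w2 g.
End PortLogic.

(* A full monomial is satisfied by exactly one interaction, so the
   +-combination of the full monomials of the interactions of a set
   [g] in C(P) has [g] as its only model in C(P).  The indicator of a PCL
   formula [f] is therefore the (+)-sum, over the finitely many models [g]
   of [f], of these characteristic formulas: since (+) is idempotent, the
   sum is 1 on a model of [f] and 0 elsewhere, and multiplying each summand
   by 1 changes nothing. *)

From mathcomp Require Import all_boot.
From Stdlib Require Import ClassicalEpsilon.

Set Implicit Arguments.
Unset Strict Implicit.
Unset Printing Implicit Defensive.

Section Normal_form.
Variable P : finType.

Lemma pil_sat_bigand (a : {set P}) (l : seq (pil P)) :
  pil_sat a (pil_bigand l) = all (pil_sat a) l.
Proof.
elim: l => [//|phi [|psi l] IHl] /=; first by rewrite andbT.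
by move: IHl => /= ->; case: (pil_sat a phi); case: (_ && _).
Qed.

Lemma pil_sat_full_monomial (a Pp : {set P}) :
  pil_sat a (full_monomial Pp) = (a == Pp).
Proof.
rewrite /full_monomial pil_sat_bigand all_map /pil_lit.
apply/allP/eqP => [sat_lit | ->]; last by move=> p _ /=; case: ifP => /= ->.
apply/setP => p; have /= := sat_lit p (mem_enum _ p).
by case: (p \in Pp) => /=; case: (p \in a).
Qed.

Lemma pcl_sat_full_monomial (g : {set {set P}}) (a : {set P}) :
  g != set0 -> (pcl_sat g (PclPil (full_monomial a)) <-> g = [set a]).
Proof.
move=> /set0Pn[b gb] /=; split => [sat_g | -> c]; last first.
  by rewrite inE pil_sat_full_monomial.
have /eqP Eb : b == a by rewrite -pil_sat_full_monomial sat_g.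
apply/setP => c; rewrite inE; apply/idP/eqP => [gc | ->]; last by rewrite -Eb.
by apply/eqP; rewrite -pil_sat_full_monomial sat_g.
Qed.

Lemma is_C_seq (a : {set P}) (s : seq {set P}) :
  all (@is_interaction P) (a :: s) -> is_C [set:: a :: s].
Proof.
move=> /allP int_s; split; first by apply/set0Pn; exists a; rewrite inE mem_head.
by move=> b; rewrite inE; apply: int_s.
Qed.

Definition monomial_sum (ij : {set P} * seq {set P}) : pcl P :=
  pcl_sum (PclPil (full_monomial ij.1))
          [seq PclPil (full_monomial Pp) | Pp <- ij.2].

Lemma pcl_sat_monomial_sum (a : {set P}) (s : seq {set P}) (g : {set {set P}}) :
  all (@is_interaction P) (a :: s) -> is_C g ->
  (pcl_sat g (monomial_sum (a, s)) <-> g = [set:: a :: s]).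
Proof.
rewrite /monomial_sum /=.
elim: s a g => [|b s IHs] a g int_as [g_n0 _].
  by rewrite set_cons set_nil setU0; apply: pcl_sat_full_monomial.
have /andP[int_a int_bs] := int_as.
rewrite set_cons; split.
  case=> [g1 [g2 [[g1_n0 _] [C_g2 [-> [sat_g1 sat_g2]]]]]].
  move/(pcl_sat_full_monomial _ g1_n0): sat_g1 => ->.
  by move/(IHs b g2 int_bs C_g2): sat_g2 => ->.
move=> ->; exists [set a], [set:: b :: s].
have C_a : is_C [set a].
  by split=> [|c /set1P -> //]; apply/set0Pn; exists a; apply: set11.
have C_bs : is_C [set:: b :: s] by apply: is_C_seq.
do 3!split=> //; split; last exact/(IHs b _ int_bs C_bs).
by apply/pcl_sat_full_monomial; case: C_a.
Qed.

Definition char_index (g : {set {set P}}) : {set P} * seq {set P} :=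
  (head set0 (enum g), behead (enum g)).

Lemma pcl_sat_char_index (g g0 : {set {set P}}) : is_C g -> is_C g0 ->
  (pcl_sat g0 (monomial_sum (char_index g)) <-> g0 = g).
Proof.
move=> [g_n0 int_g] C_g0; rewrite /char_index.
have Eg : [set:: enum g] = g by apply/setP => x; rewrite inE mem_enum.
case Eenum: (enum g) Eg => [|a s] Eg /=.
  by case/set0Pn: g_n0 => x; rewrite -mem_enum Eenum.
rewrite pcl_sat_monomial_sum ?Eg //.
by apply/allP => x; rewrite -Eenum mem_enum; apply: int_g.
Qed.

Definition asbool (Q : Prop) : bool :=
  if excluded_middle_informative Q then true else false.

Lemma asboolP (Q : Prop) : reflect Q (asbool Q).
Proof. by rewrite /asbool; case: excluded_middle_informative => ?; constructor. Qed.

Definition models (f : pcl P) : seq {set {set P}} :=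
  [seq g <- enum {set {set P}} | asbool (is_C g /\ pcl_sat g f)].

Lemma models_is_C (f : pcl P) (g : {set {set P}}) : g \in models f -> is_C g.
Proof. by rewrite mem_filter => /andP[/asboolP[]]. Qed.

Lemma mem_models (f : pcl P) (g : {set {set P}}) :
  is_C g -> (g \in models f) = asbool (pcl_sat g f).
Proof.
move=> C_g; rewrite mem_filter mem_enum andbT.
by apply/asboolP/asboolP => [[] | sat_g].
Qed.

Variable D : pvMonoid.

Lemma wsem_WPcl (f : pcl P) (g : {set {set P}}) :
  wsem (WPcl D f) g = if asbool (pcl_sat g f) then pv_one D else pv_zero D.
Proof. by rewrite /asbool /=; case: excluded_middle_informative. Qed.

Hypothesis idD : pv_idempotent D.

Lemma wsem_wbigoplus_indicator (T : eqType) (F : T -> wform P D) (b : pred T)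
    (L : seq T) (g : {set {set P}}) :
  {in L, forall x, wsem (F x) g = if b x then pv_one D else pv_zero D} ->
  wsem (wbigoplus [seq F x | x <- L]) g
    = if has b L then pv_one D else pv_zero D.
Proof.
elim: L => [//|x L IHL] semF /=.
rewrite semF ?mem_head // IHL => [|y Ly]; last by rewrite semF // inE Ly orbT.
by case: (b x); case: (has b L); rewrite ?idD ?pv_add0d // pv_addC pv_add0d.
Qed.

Lemma wsem_wbigoplus_models (F : wform P D -> wform P D)
    (semF : forall w g, wsem (F w) g = wsem w g) (f : pcl P) (g0 : {set {set P}}) :
  is_C g0 ->
  wsem (wbigoplus [seq F (WPcl D s) | s <- [seq monomial_sum ij
                     | ij <- [seq char_index g | g <- models f]]]) g0
    = wsem (WPcl D f) g0.
Proof.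
move=> C_g0; rewrite -!map_comp (wsem_wbigoplus_indicator (b := pred1 g0)).
  by rewrite has_pred1 mem_models // wsem_WPcl.
move=> g /models_is_C C_g /=; rewrite semF wsem_WPcl.
have sat_char := pcl_sat_char_index C_g C_g0.
case: asboolP => [/sat_char -> | not_sat]; first by rewrite eqxx.
by case: eqP => // Eg; case: not_sat; apply/sat_char.
Qed.

End Normal_form.

Theorem mainTheorem11 (D : pvMonoid) (HidD : pv_idempotent D)
  (HsymD : pv_val_symmetric D) (P : finType) (HP : 0 < #|P|) (f : pcl P) :
  exists I : seq ({set P} * seq {set P}),
    let sums := [seq pcl_sum (PclPil (full_monomial ij.1))
                             [seq PclPil (full_monomial Pp) | Pp <- ij.2]
                | ij <- I] in
    wequiv (WPcl D f) (wbigoplus [seq WPcl D s | s <- sums]) /\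
    wequiv (WPcl D f)
      (wbigoplus [seq WOtimes (WConst P (pv_one D)) (WPcl D s) | s <- sums]).
Proof.
exists [seq char_index g | g <- models f]; split => g C_g.
  by rewrite (wsem_wbigoplus_models HidD (F := id)).
by rewrite (wsem_wbigoplus_models HidD (F := WOtimes (WConst P (pv_one D))))
  // => w h /=; rewrite pv_mul1d.
Qed.
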